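(* Let $d\ge2$ and let $\rho$ be a diagonal symmetric state on $\mathbb{C}^d\otimes\mathbb{C}^d$ that is PPT, with associated matrix $M=M(\rho)$. Let $\mathbf{x}\in\mathbb{R}^d$ with $x_i>0$ for all $i$, let $\|\mathbf{x}\|_1=\sum_i x_i$, let $\ket{u_{\mathbf{x}}}=\mathbf{x}/\|\mathbf{x}\|_1$, and let $M^{+}$ denote the Moore–Penrose pseudo-inverse of $M$. Suppose there exists $\lambda\in[0,1)$ such that (1) $\lambda\le M_{ij}\|\mathbf{x}\|_1^2/(x_ix_j)$ for all $i,j$; (2) $\ket{u_{\mathbf{x}}}$ lies in the range of $M$ and $\lambda\le 1/\bra{u_{\mathbf{x}}}M^{+}\ket{u_{\mathbf{x}}}$; (3) $\lambda x_i(\|\mathbf{x}\|_1-2x_i)\ge\|\mathbf{x}\|_1^2\left[\sum_{j\ne i}M_{ij}-M_{ii}\right]$ for all $i$. Then $\rho$ is separable; equivalently, $M(\rho)$ is completely positive.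
   Context: Let $\{\ket{0},\dots,\ket{d-1}\}$ be the computational basis of $\mathbb{C}^d$. Define $\ket{D_{ii}}=\ket{ii}$ and, for $i<j$, $\ket{D_{ij}}=(\ket{ij}+\ket{ji})/\sqrt{2}$. A state $\rho$ on $\mathbb{C}^d\otimes\mathbb{C}^d$ is diagonal symmetric (DS) if $\rho=\sum_{0\le i\le j<d}p_{ij}\ket{D_{ij}}\bra{D_{ij}}$ with $p_{ij}\ge 0$ and $\sum_{i\le j}p_{ij}=1$; set $p_{ji}=p_{ij}$. Its associated matrix $M(\rho)$ is the real symmetric $d\times d$ matrix with $M(\rho)_{ii}=p_{ii}$ and $M(\rho)_{ij}=p_{ij}/2$ for $i\ne j$. $\rho$ is PPT if its partial transpose with respect to the computational basis of the second factor is positive semidefinite. A state is separable if it is a convex combination of product states $\rho^A\otimes\rho^B$. A real $d\times d$ matrix $A$ is completely positive if $A=BB^T$ for some real $d\times k$ matrix $B$ with non-negative entries. *)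

From HB Require Import structures.
From mathcomp Require Import all_boot all_order all_algebra.
From mathcomp Require Import reals.
From mathcomp Require Import complex mxtens.
Set Implicit Arguments. Unset Strict Implicit. Unset Printing Implicit Defensive.
Import Order.TTheory GRing.Theory Num.Theory.
Local Open Scope ring_scope.

Section QuantumDefs.
Variable R : realType.
Local Notation C := (R[i]).

Definition toC (r : R) : C := Complex r 0.

Definition adjmx m n (A : 'M[C]_(m, n)) : 'M[C]_(n, m) :=
  \matrix_(i, j) conjc (A j i).

Definition psdmx n (A : 'M[C]_n) : Prop :=
  A = adjmx A /\ forall v : 'cV[C]_n, 0 <= (adjmx v *m A *m v) 0 0.

Definition density n (A : 'M[C]_n) : Prop := psdmx A /\ \tr A = 1.

(* computational basis vector |i j> of C^d (x) C^d; the product index of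
   (i,j) is i*d + j (mxtens_index), consistent with the Kronecker product *t *)
Definition ket2 d (i j : 'I_d) : 'cV[C]_(d * d) :=
  \col_k (k == mxtens_index (i, j))%:R.

Definition Dket d (i j : 'I_d) : 'cV[C]_(d * d) :=
  if i == j then ket2 i i
  else toC (Num.sqrt 2)^-1 *: (ket2 i j + ket2 j i).

(* weights p_ij (i <= j) of a DS state, extended symmetrically p_ji = p_ij *)
Definition DS_weights d (p : 'I_d -> 'I_d -> R) : Prop :=
  (forall i j, 0 <= p i j) /\ (forall i j, p i j = p j i) /\
  \sum_(i < d) \sum_(j < d | (i <= j)%N) p i j = 1.

Definition DS_state d (p : 'I_d -> 'I_d -> R) : 'M[C]_(d * d) :=
  \sum_(i < d) \sum_(j < d | (i <= j)%N)
     toC (p i j) *: (Dket i j *m adjmx (Dket i j)).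

Definition assoc_mx d (p : 'I_d -> 'I_d -> R) : 'M[R]_d :=
  \matrix_(i, j) (if i == j then p i i else p i j / 2).

Definition ptranspose2 d (A : 'M[C]_(d * d)) : 'M[C]_(d * d) :=
  \matrix_(r, c)
    A (mxtens_index ((mxtens_unindex r).1, (mxtens_unindex c).2))
      (mxtens_index ((mxtens_unindex c).1, (mxtens_unindex r).2)).

Definition PPT d (A : 'M[C]_(d * d)) : Prop := psdmx (ptranspose2 A).

Definition separable d (A : 'M[C]_(d * d)) : Prop :=
  exists (m : nat) (w : 'I_m -> R) (Aa Bb : 'I_m -> 'M[C]_d),
    [/\ forall k, 0 <= w k, \sum_(k < m) w k = 1,
        forall k, density (Aa k) /\ density (Bb k) &
        A = \sum_(k < m) toC (w k) *: (Aa k *t Bb k)].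

Definition completely_positive d (A : 'M[R]_d) : Prop :=
  exists (k : nat) (B : 'M[R]_(d, k)), (forall i j, 0 <= B i j) /\ A = B *m B^T.

Definition is_MP_pinv d (A X : 'M[R]_d) : Prop :=
  [/\ A *m X *m A = A, X *m A *m X = X, (A *m X)^T = A *m X & (X *m A)^T = X *m A].

Definition norm1 d (x : 'I_d -> R) : R := \sum_(i < d) x i.
Definition uvec d (x : 'I_d -> R) : 'cV[R]_d := \col_i (x i / norm1 x).

End QuantumDefs.

From mathcomp Require Import all_boot all_order all_algebra.
From mathcomp Require Import reals.
From mathcomp Require Import complex mxtens.
From mathcomp Require Import zify ring lra.
Import Order.TTheory GRing.Theory Num.Theory.
Local Open Scope ring_scope.
Set Implicit Arguments. Unset Strict Implicit. Unset Printing Implicit Defensive.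

(* Put s := |x|_1 and u := x / s.  Conditions (1) and (3) say exactly that
   N := M - lam u u^T is entrywise nonnegative and diagonally dominant, and such
   an N is a nonnegative combination of the matrices (e_i + e_j)(e_i + e_j)^T;
   so M = lam u u^T + N is completely positive.  Conversely, given M = sum_c b_c b_c^T with b_c >= 0, let
   psi_(c,s) := sum_a sqrt(b_c a) i^(s a) |a>  for phases s : [0,d) -> Z/4.
   Averaging psi psi^* (x) psi psi^* over s kills the entry <ij|.|mn> unless
   {i,j} = {m,n}, where it leaves b_c i * b_c j; summing over c rebuilds rho,
   which is therefore a convex combination of product states. *)

Section FourthRootsOfUnity.
Variable R : realType.
Local Notation C := (R[i]).
Local Notation i := ('i%C : C).

Lemma expr_i4 : i ^+ 4 = 1.
Proof. by rewrite (exprM _ 2 2) sqr_i sqrrN expr1n. Qed.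

Lemma expr_i_mod4 k : i ^+ k = i ^+ (k %% 4).
Proof. by rewrite {1}(divn_eq k 4) exprD mulnC exprM expr_i4 expr1n mul1r. Qed.

Lemma conjc_expr_i k : (i ^+ k)^*%C = i ^+ (3 * k).
Proof.
rewrite rmorphXn exprM; congr (_ ^+ _).
by rewrite exprS sqr_i mulrN1; apply/eqP; rewrite eq_complex /= oppr0 !eqxx.
Qed.

Lemma sum_expr_i r : \sum_(t < 4) (i ^+ r) ^+ t = if (4 %| r)%N then 4 else 0.
Proof.
have -> : \sum_(t < 4) (i ^+ r) ^+ t = (1 + i ^+ r) * (1 + i ^+ (2 * r)).
  by rewrite !big_ord_recl big_ord0 /bump /= mulnC exprM; ring.
rewrite expr_i_mod4 (expr_i_mod4 (2 * r)) -modnMmr /dvdn.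
move: (r %% 4)%N (ltn_pmod r (isT : (0 < 4)%N)) => {r}.
by case=> [|[|[|[|r]]]] // _; rewrite /= ?sqr_i; ring.
Qed.

Lemma sum_prod_expr_i d (e : 'I_d -> nat) :
  \sum_(s : {ffun 'I_d -> 'I_4}) \prod_x (i ^+ e x) ^+ s x
  = if [forall x, 4 %| e x]%N then (4 ^ d)%:R else 0.
Proof.
rewrite -(bigA_distr_bigA (fun x (t : 'I_4) => (i ^+ e x) ^+ t)) /=.
under eq_bigr do rewrite sum_expr_i.
case: ifP => [/forallP e4 | /negbT]; last first.
  by rewrite negb_forall => /existsP [x /negbTE ex]; rewrite (bigD1 x) //= ex mul0r.
by under eq_bigr do rewrite e4; rewrite prodr_const card_ord natrX.
Qed.

End FourthRootsOfUnity.

Definition eq_upair d (i j m n : 'I_d) := ((i == m) && (j == n)) || ((i == n) && (j == m)).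

Lemma phase_sum (R : realType) d (i j m n : 'I_d) :
  \sum_(s : {ffun 'I_d -> 'I_4})
     ('i%C ^+ s i * 'i%C ^+ s j * conjc ('i%C ^+ s m) * conjc ('i%C ^+ s n) : R[i])
  = if eq_upair i j m n then (4 ^ d)%:R else 0.
Proof.
pose e x := ((x == i) + (x == j) + 3 * (x == m) + 3 * (x == n))%N.
have upairE : eq_upair i j m n = [forall x, 4 %| e x]%N.
  apply/idP/forallP => [+ x | e4]; last move: (e4 i) (e4 j);
    by rewrite /eq_upair /e -!val_eqE /=; lia.
rewrite upairE -sum_prod_expr_i; apply: eq_bigr => s _.
rewrite !conjc_expr_i -!exprD; under eq_bigr do rewrite -exprM; rewrite prodrXr.
have pick_nat (a : 'I_d) F : (\sum_x (x == a) * F x)%N = F a.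
  by rewrite (bigD1 a) //= eqxx mul1n big1 ?addn0 // => x /negbTE ->.
congr (_ ^+ _); rewrite (eq_bigr (fun x => (x == i) * s x + (x == j) * s x
  + (x == m) * (3 * s x) + (x == n) * (3 * s x)))%N => [|x _]; last by rewrite /e; ring.
by rewrite !big_split /= !pick_nat.
Qed.

Section States.
Variables (R : realType) (n : nat).
Local Notation C := (R[i]).

Lemma toCE (r : R) : toC r = r%:C%C. Proof. by []. Qed.

Lemma mul_col_adjmxE (u : 'cV[C]_n) r c : (u *m adjmx u) r c = u r 0 * (u c 0)^*%C.
Proof. by rewrite !mxE big_ord1 mxE. Qed.

Lemma psd_mul_col_adjmx (u : 'cV[C]_n) : psdmx (u *m adjmx u).
Proof.
split.
  by apply/matrixP => i j; rewrite [RHS]mxE !mul_col_adjmxE rmorphM /= conjcK mulrC.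
move=> v; rewrite !mulmxA -(mulmxA (adjmx v *m u)) mxE big_ord1.
have -> : (adjmx v *m u) 0 0 = ((adjmx u *m v) 0 0)^*%C.
  by rewrite !mxE rmorph_sum; apply: eq_bigr => k _; rewrite !mxE rmorphM /= conjcK mulrC.
by rewrite mulrC mulcJ_ge0.
Qed.

Lemma psd_scale (r : R) (A : 'M[C]_n) : 0 <= r -> psdmx A -> psdmx (toC r *: A).
Proof.
move=> r_ge0 [A_herm A_pos]; split.
  by apply/matrixP => i j; rewrite !mxE rmorphM /= oppr0 {1}A_herm mxE.
by move=> v; rewrite -scalemxAr -scalemxAl mxE mulr_ge0 // toCE ler0c.
Qed.

Lemma trace_mul_col_adjmx (u : 'cV[C]_n) :
  \tr (u *m adjmx u) = \sum_i u i 0 * (u i 0)^*%C.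
Proof. by apply: eq_bigr => i _; rewrite mul_col_adjmxE. Qed.

Lemma density_delta (i0 : 'I_n) : density (delta_mx i0 i0 : 'M[C]_n).
Proof.
have -> : delta_mx i0 i0 = (delta_mx i0 0 : 'cV[C]_n) *m adjmx (delta_mx i0 0).
  by apply/matrixP => a b; rewrite mul_col_adjmxE !mxE !andbT conjc_nat -natrM mulnb.
split; first exact: psd_mul_col_adjmx.
rewrite trace_mul_col_adjmx (bigD1 i0) //= big1 ?addr0 => [|a /negbTE a_neq].
  by rewrite !mxE !eqxx conjc_nat mulr1.
by rewrite !mxE a_neq mul0r.
Qed.

End States.

Section DiagonalSymmetricEntries.
Variables (R : realType) (d : nat).
Implicit Types (p : 'I_d -> 'I_d -> R) (a b i j m n : 'I_d).

Definition dket_coef a b : R := if a == b then 1 else (Num.sqrt 2)^-1.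

Lemma Dket_entry a b i j :
  Dket R a b (mxtens_index (i, j)) 0 = toC (if eq_upair a b i j then dket_coef a b else 0).
Proof.
have idxE k l : (mxtens_index (i, j) == mxtens_index (k, l)) = (i == k) && (j == l).
  by rewrite (can_eq (@mxtens_indexK d d)) xpair_eqE.
rewrite /Dket /eq_upair /dket_coef; case: eqP => [<-|/eqP neq_ab]; rewrite !mxE !idxE.
all: rewrite !(eq_sym a) ?(eq_sym b) (andbC (j == a)).
  by rewrite orbb; case: (_ && _).
have : ~~ ((i == a) && (j == b) && ((i == b) && (j == a))).
  by move: neq_ab; rewrite -!val_eqE /=; lia.
case: ((i == a) && (j == b)); case: ((i == b) && (j == a)) => //= _;
  by rewrite ?addr0 ?add0r ?mulr1 ?mulr0.
Qed.

Lemma sum_upper_upair (F : 'I_d -> 'I_d -> R) i j : (forall a b, F a b = F b a) ->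
  \sum_(a < d) \sum_(b < d | (a <= b)%N) (if eq_upair a b i j then F a b else 0) = F i j.
Proof.
move=> Fsym; wlog le_ij : i j / (i <= j)%N => [wlog_le|].
  case: (leqP i j) => [|/ltnW] ? ; first exact: wlog_le.
  rewrite Fsym -wlog_le //; apply: eq_bigr => a _; apply: eq_bigr => b _.
  by rewrite /eq_upair orbC.
have upairE (a b : 'I_d) : (a <= b)%N -> eq_upair a b i j = (a == i) && (b == j).
  by rewrite /eq_upair -!val_eqE /=; lia.
rewrite (bigD1 i) //= (bigD1 j) ?le_ij //= upairE // !eqxx /=.
rewrite big1 => [|b /andP[le_ib neq_bj]]; last by rewrite upairE // (negbTE neq_bj) andbF.
rewrite addr0 big1 ?addr0 // => a neq_ai; apply: big1 => b le_ab.
by rewrite upairE // (negbTE neq_ai).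
Qed.

Lemma DS_stateE p i j m n : (forall a b, p a b = p b a) ->
  DS_state p (mxtens_index (i, j)) (mxtens_index (m, n))
  = toC (if eq_upair i j m n then assoc_mx p i j else 0).
Proof.
move=> psym; pose F a b := p a b * dket_coef a b ^+ 2.
have termE a b : (toC (p a b) *: (Dket R a b *m adjmx (Dket R a b)))
                   (mxtens_index (i, j)) (mxtens_index (m, n))
    = toC (if eq_upair i j m n && eq_upair a b i j then F a b else 0).
  have -> : eq_upair i j m n && eq_upair a b i j = eq_upair a b i j && eq_upair a b m n.
    by rewrite /eq_upair -!val_eqE /=; lia.
  rewrite mxE mul_col_adjmxE !Dket_entry conjc_real !toCE -!rmorphM; congr (_%:C)%C.
  by case: (eq_upair a b i j); case: (eq_upair a b m n); rewrite /F /=; ring.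
rewrite /DS_state summxE; under eq_bigr do rewrite summxE.
under eq_bigr do under eq_bigr do rewrite termE.
case: ifP => _ /=; last by rewrite big1 // => a _; rewrite big1.
have -> : assoc_mx p i j = F i j.
  rewrite mxE /F /dket_coef; case: eqP => [->|_]; first by rewrite expr1n mulr1.
  by rewrite exprVn sqr_sqrtr ?ler0n.
rewrite -(sum_upper_upair (F := F)) => [|a b]; last by rewrite /F psym /dket_coef eq_sym.
by rewrite toCE rmorph_sum; apply: eq_bigr => a _; rewrite rmorph_sum.
Qed.

Lemma assoc_mxC p :
  (forall a b, p a b = p b a) -> forall a b, assoc_mx p a b = assoc_mx p b a.
Proof. by move=> psym a b; rewrite !mxE eq_sym psym; case: eqP => [->|]. Qed.

Lemma sum_assoc_mx p :
  DS_weights p -> \sum_a \sum_b assoc_mx p a b = 1.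
Proof.
move=> [_ [psym <-]]; set M := assoc_mx p.
have split_diag (F : 'I_d -> R) (a : 'I_d) :
    \sum_(b < d | (a <= b)%N) F b = F a + \sum_(b < d | (a < b)%N) F b.
  rewrite (bigD1 a) //=; congr (_ + _).
  by apply: eq_bigl => b; rewrite ltn_neqAle eq_sym andbC.
have upper_lower (a : 'I_d) :
    \sum_b M a b = \sum_(b < d | (a <= b)%N) M a b + \sum_(b < d | (b < a)%N) M a b.
  rewrite (bigID (fun b : 'I_d => (a <= b)%N)) /=; congr (_ + _).
  by apply: eq_bigl => b; rewrite ltnNge.
under eq_bigr do rewrite upper_lower.
rewrite big_split /= [X in _ + X](exchange_big_dep xpredT) //= -big_split.
apply: eq_bigr => a _ /=; rewrite split_diag -addrA -big_split split_diag /M mxE eqxx /=.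
congr (_ + _); apply: eq_bigr => b /ltn_eqF; rewrite val_eqE => neq_ab.
by rewrite (assoc_mxC psym b) !mxE neq_ab; lra.
Qed.

End DiagonalSymmetricEntries.

Section PhaseAveragedStates.
Variables (R : realType) (d : nat) (i0 : 'I_d) (v : 'I_d -> R).
Hypothesis v_ge0 : forall a, 0 <= v a.
Local Notation C := (R[i]).
Local Notation phase := {ffun 'I_d -> 'I_4}.

Definition phase_vec (s : phase) : 'cV[C]_d :=
  \col_a (toC (Num.sqrt (v a)) * 'i%C ^+ s a).

(* For v = 0 the state is irrelevant (it gets weight 0 in [DS_state_gram]);
   [delta_mx i0 i0] merely makes it a density matrix. *)
Definition phase_state (s : phase) : 'M[C]_d :=
  if \sum_a v a == 0 then delta_mx i0 i0
  else toC (\sum_a v a)^-1 *: (phase_vec s *m adjmx (phase_vec s)).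

Lemma phase_vec_sqnorm s a : phase_vec s a 0 * (phase_vec s a 0)^*%C = toC (v a).
Proof.
rewrite mxE rmorphM /= oppr0 conjc_expr_i mulrACA -exprD -mulSn exprM expr_i4.
by rewrite expr1n mulr1 toCE -rmorphM -expr2 sqr_sqrtr.
Qed.

Lemma density_phase_state s : density (phase_state s).
Proof.
rewrite /phase_state; case: eqP => [_|/eqP t_neq0]; first exact: density_delta.
split; first by apply: psd_scale; [rewrite invr_ge0 sumr_ge0 | exact: psd_mul_col_adjmx].
rewrite mxtraceZ trace_mul_col_adjmx (eq_bigr _ (fun a _ => phase_vec_sqnorm s a)).
under eq_bigr do rewrite toCE.
by rewrite toCE -rmorph_sum -rmorphM mulVf.
Qed.

Lemma phase_average i j m n :
  \sum_(s : phase) toC ((\sum_a v a) ^+ 2 / (4 ^ d)%:R) * (phase_state s i m * phase_state s j n)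
  = toC (if eq_upair i j m n then v i * v j else 0).
Proof.
rewrite /phase_state; set t := \sum_a v a.
have [t0 | t_neq0] := eqVneq t 0.
  have v0 a : v a = 0 by apply: (psumr_eq0P (fun a _ => v_ge0 a) t0).
  rewrite t0 expr0n /= mul0r big1 => [|s _]; last by rewrite mul0r.
  by rewrite !v0 mul0r; case: ifP.
pose sq a := Num.sqrt (v a).
have entryE s a b : (toC t^-1 *: (phase_vec s *m adjmx (phase_vec s))) a b
    = toC (t^-1 * (sq a * sq b)) * ('i%C ^+ s a * conjc ('i%C ^+ s b)).
  rewrite mxE mul_col_adjmxE !mxE rmorphM /= oppr0 complexr0 !toCE !rmorphM /sq /=.
  ring.
under eq_bigr do rewrite !entryE.
pose c := t ^+ 2 / (4 ^ d)%:R * (t^-1 * (sq i * sq m)) * (t^-1 * (sq j * sq n)).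
rewrite (eq_bigr (fun s : phase => toC c *
  ('i%C ^+ s i * 'i%C ^+ s j * conjc ('i%C ^+ s m) * conjc ('i%C ^+ s n)))) => [|s _]; last first.
  by rewrite /c !toCE !rmorphM; ring.
rewrite -mulr_sumr phase_sum; case: ifP => [upair_ijmn|_]; last by rewrite mulr0.
rewrite toCE -(rmorph_nat (real_complex R)) -rmorphM; congr (_%:C)%C.
transitivity (sq i * sq m * (sq j * sq n)).
  by rewrite /c; field; rewrite t_neq0 pnatr_eq0 expn_eq0.
have sqK a : sq a * sq a = v a by rewrite -expr2 sqr_sqrtr.
by case/orP: upair_ijmn => /andP[/eqP <- /eqP <-]; rewrite -sqK -(sqK j); ring.
Qed.

End PhaseAveragedStates.

Lemma separable_convex_sum (R : realType) d (T : finType) (w : T -> R)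
    (A B : T -> 'M[R[i]]_d) :
  (forall t, 0 <= w t) -> \sum_t w t = 1 ->
  (forall t, density (A t) /\ density (B t)) ->
  separable (\sum_t toC (w t) *: (A t *t B t)).
Proof.
move=> w_ge0 w_sum1 AB_density.
exists #|T|, (w \o enum_val), (A \o enum_val), (B \o enum_val).
by split=> //=; rewrite -?w_sum1 (big_enum_val (A := T)).
Qed.

Section GramDecomposition.
Variables (R : realType) (d k : nat) (i0 : 'I_d) (B : 'M[R]_(d, k)).
Hypothesis B_ge0 : forall a c, 0 <= B a c.
Local Notation phase := {ffun 'I_d -> 'I_4}.

Definition gram_weight (c : 'I_k) : R := (\sum_a B a c) ^+ 2 / (4 ^ d)%:R.

Definition gram_state (c : 'I_k) (s : phase) := phase_state i0 (fun a => B a c) s.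

Lemma sum_gram_weight :
  \sum_(cs : 'I_k * phase) gram_weight cs.1 = \sum_a \sum_b (B *m B^T) a b.
Proof.
rewrite -(pair_bigA _ (fun c (s : phase) => gram_weight c)) /=.
under eq_bigr do rewrite sumr_const card_ffun !card_ord /gram_weight
  -(mulr_natr (_ / _)) mulfVK ?pnatr_eq0 ?expn_eq0 //.
under eq_bigr do rewrite expr2 mulr_suml.
rewrite exchange_big; apply: eq_bigr => a _; under eq_bigr do rewrite mulr_sumr.
rewrite exchange_big; apply: eq_bigr => b _.
by rewrite !mxE; apply: eq_bigr => c _; rewrite mxE.
Qed.

Lemma DS_state_gram p : (forall a b, p a b = p b a) -> assoc_mx p = B *m B^T ->
  DS_state p = \sum_(cs : 'I_k * phase)
    toC (gram_weight cs.1) *: (gram_state cs.1 cs.2 *t gram_state cs.1 cs.2).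
Proof.
move=> psym MB; apply/matrixP => r c; rewrite -(mxtens_unindexK r) -(mxtens_unindexK c).
case: (mxtens_unindex r) (mxtens_unindex c) => i j [m n].
pose F c s := toC (gram_weight c) * (gram_state c s i m * gram_state c s j n).
rewrite DS_stateE // summxE (eq_bigr (fun cs => F cs.1 cs.2)) => [|cs _]; last first.
  by rewrite mxE tensmxE.
rewrite -(pair_bigA _ F) /F /gram_state /gram_weight /=.
under eq_bigr do rewrite phase_average //.
case: ifP => _; last by rewrite big1.
by rewrite MB mxE toCE rmorph_sum; apply: eq_bigr => l _; rewrite mxE.
Qed.

End GramDecomposition.

Lemma separable_DS_of_cp (R : realType) d (p : 'I_d -> 'I_d -> R) :
  DS_weights p -> completely_positive (assoc_mx p) -> separable (DS_state p).
Proof.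
case: d p => [|d] p wp [k [B [B_ge0 MB]]].
  by move: wp => [_ [_]]; rewrite big_ord0 => /eqP; rewrite eq_sym oner_eq0.
have [_ [psym _]] := wp.
rewrite (DS_state_gram ord0 B_ge0 psym MB).
apply: separable_convex_sum => [cs||cs].
- by rewrite divr_ge0 ?exprn_ge0 ?sumr_ge0.
- by rewrite sum_gram_weight -MB sum_assoc_mx.
- by split; apply: density_phase_state.
Qed.

Section DiagonalDominance.
Variables (R : realType) (d : nat) (N : 'M[R]_d).
Hypothesis Nsym : forall i j, N i j = N j i.
Local Notation e i := (delta_mx i 0 : 'cV[R]_d).

Definition dd_weight i j : R :=
  if i == j then (N i i - \sum_(k | k != i) N i k) / 4 else N i j / 2.

Lemma dd_weightC i j : dd_weight i j = dd_weight j i.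
Proof. by rewrite /dd_weight eq_sym; case: eqP => [->|] //; rewrite Nsym. Qed.

Lemma sum_dd_weight i : \sum_j dd_weight i j = (N i i + \sum_(k | k != i) N i k) / 4.
Proof.
rewrite (bigD1 i) //= (eq_bigr (fun k => N i k / 2)) => [|k]; last first.
  by rewrite /dd_weight eq_sym => /negbTE ->.
by rewrite /dd_weight eqxx -mulr_suml; lra.
Qed.

Lemma dd_decomposition :
  N = \sum_i \sum_j dd_weight i j *: ((e i + e j) *m (e i + e j)^T).
Proof.
apply/matrixP => a b; pose w := dd_weight; pose dl (i j : 'I_d) : R := (i == j)%:R.
have termE i j : (w i j *: ((e i + e j) *m (e i + e j)^T)) a b
    = w i j * (dl a i * (dl b i + dl b j)) + w i j * (dl a j * (dl b j + dl b i)).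
  by rewrite !mxE big_ord1 !mxE !andbT /dl; ring.
have pick (F : 'I_d -> R) (c : 'I_d) : \sum_i dl c i * F i = F c.
  rewrite (bigD1 c) //= /dl eqxx mul1r big1 ?addr0 // => i.
  by rewrite eq_sym => /negbTE ->; rewrite mul0r.
rewrite summxE; under eq_bigr do rewrite summxE; under eq_bigr do under eq_bigr do rewrite termE.
under eq_bigr do rewrite big_split /=; rewrite big_split /=.
have -> : \sum_i \sum_j w i j * (dl a j * (dl b j + dl b i))
          = \sum_i \sum_j w i j * (dl a i * (dl b i + dl b j)).
  by rewrite exchange_big; apply: eq_bigr => i _; apply: eq_bigr => j _; rewrite /w dd_weightC.
under eq_bigr do under eq_bigr do rewrite mulrCA.
under eq_bigr do rewrite -mulr_sumr; rewrite -mulr2n pick.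
under eq_bigr do rewrite mulrDr; rewrite big_split /= -mulr_suml.
under eq_bigr do rewrite mulrC; rewrite pick sum_dd_weight /w /dd_weight /dl eq_sym.
by case: eqP => [->|_] /=; lra.
Qed.

End DiagonalDominance.

Section CompletelyPositive.
Variables (R : realType) (d : nat).
Implicit Types (A B : 'M[R]_d).

Lemma cp0 : completely_positive (0 : 'M[R]_d).
Proof. by exists 0%N, 0; split=> [i j|]; rewrite ?mxE // mul0mx. Qed.

Lemma cpD A B :
  completely_positive A -> completely_positive B -> completely_positive (A + B).
Proof.
move=> [k [F [F_ge0 ->]]] [l [G [G_ge0 ->]]].
exists (k + l)%N, (row_mx F G); split; last by rewrite tr_row_mx mul_row_col.
by move=> i j; rewrite mxE; case: splitP.
Qed.

Lemma cp_sum (I : Type) (r : seq I) (P : pred I) (F : I -> 'M[R]_d) :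
  (forall i, P i -> completely_positive (F i)) ->
  completely_positive (\sum_(i <- r | P i) F i).
Proof. by move=> F_cp; apply: big_ind => //; [exact: cp0 | exact: cpD]. Qed.

Lemma cp_rank1 (c : R) (u : 'cV[R]_d) :
  0 <= c -> (forall i, 0 <= u i 0) -> completely_positive (c *: (u *m u^T)).
Proof.
move=> c_ge0 u_ge0; exists 1%N, (Num.sqrt c *: u); split=> [i j|].
  by rewrite mxE ord1 mulr_ge0 ?sqrtr_ge0.
by rewrite linearZ /= -scalemxAl -scalemxAr scalerA -expr2 sqr_sqrtr.
Qed.

Lemma cp_diag_dominant (N : 'M[R]_d) :
  (forall i j, N i j = N j i) -> (forall i j, 0 <= N i j) ->
  (forall i, \sum_(j | j != i) N i j <= N i i) -> completely_positive N.
Proof.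
move=> Nsym N_ge0 N_dom; rewrite (dd_decomposition Nsym).
apply: cp_sum => i _; apply: cp_sum => j _; apply: cp_rank1 => [|k].
  by rewrite /dd_weight; case: ifP => _; rewrite divr_ge0 ?subr_ge0.
by rewrite !mxE addr_ge0.
Qed.

Lemma cp_rank1_add_diag_dominant (M : 'M[R]_d) (c : R) (u : 'cV[R]_d) :
  (forall i j, M i j = M j i) -> 0 <= c -> (forall i, 0 <= u i 0) ->
  (forall i j, c * (u i 0 * u j 0) <= M i j) ->
  (forall i, \sum_(j | j != i) (M i j - c * (u i 0 * u j 0)) <= M i i - c * (u i 0 * u i 0)) ->
  completely_positive M.
Proof.
move=> Msym c_ge0 u_ge0 uu_le dom.
have -> : M = c *: (u *m u^T) + (M - c *: (u *m u^T)) by rewrite addrC subrK.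
have NE i j : (M - c *: (u *m u^T)) i j = M i j - c * (u i 0 * u j 0).
  by rewrite !mxE big_ord1 !mxE.
apply: cpD; first exact: cp_rank1.
apply: cp_diag_dominant => [i j|i j|i]; rewrite ?NE.
- by rewrite Msym (mulrC (u i 0)).
- by rewrite subr_ge0.
- by under eq_bigr do rewrite NE.
Qed.

End CompletelyPositive.

Lemma cp_of_uvec_bounds (R : realType) d (M : 'M[R]_d) (x : 'I_d -> R) (lam : R) :
  (forall i j, M i j = M j i) -> (forall i, 0 < x i) -> 0 <= lam ->
  (forall i j, lam <= M i j * norm1 x ^+ 2 / (x i * x j)) ->
  (forall i, norm1 x ^+ 2 * (\sum_(j < d | j != i) M i j - M i i)
             <= lam * x i * (norm1 x - 2 * x i)) ->
  completely_positive M.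
Proof.
move=> Msym x_gt0 lam_ge0 lower dom; set s := norm1 x.
have sum_neq i : \sum_(j | j != i) x j = s - x i.
  by rewrite /s /norm1 [in RHS](bigD1 i) //= addrC addrK.
have s_gt0 (i : 'I_d) : 0 < s.
  by rewrite /s /norm1 (bigD1 i) //= ltr_pwDl ?x_gt0 ?sumr_ge0 // => j _; apply/ltW.
apply: (cp_rank1_add_diag_dominant (c := lam) (u := uvec x)) => // [i|i j|i]; rewrite !mxE.
- by apply: divr_ge0; apply: ltW; [exact: x_gt0 | exact: s_gt0 i].
- have xx_gt0 : 0 < x i * x j by rewrite mulr_gt0.
  have -> : lam * (x i / s * (x j / s)) = lam / (s ^+ 2 / (x i * x j)).
    by field; rewrite !gt_eqF ?(s_gt0 i) ?x_gt0.
  by rewrite ler_pdivrMr ?divr_gt0 ?exprn_gt0 ?(s_gt0 i) // mulrA.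
- under eq_bigr do rewrite mxE.
  rewrite -/s sumrB -!mulr_sumr -mulr_suml sum_neq -subr_ge0.
  have -> : M i i - lam * (x i / s * (x i / s))
             - (\sum_(j | j != i) M i j - lam * (x i / s * ((s - x i) / s)))
      = (lam * x i * (s - 2 * x i) - s ^+ 2 * (\sum_(j | j != i) M i j - M i i)) / s ^+ 2.
    by field; rewrite gt_eqF ?(s_gt0 i).
  by rewrite divr_ge0 ?sqr_ge0 // subr_ge0 dom.
Qed.

Theorem theorem6 (R : realType) (d : nat) (p : 'I_d -> 'I_d -> R)
    (x : 'I_d -> R) (Mplus : 'M[R]_d) (lam : R) :
  (2 <= d)%N ->
  DS_weights p ->
  PPT (DS_state p) ->
  (forall i, 0 < x i) ->
  is_MP_pinv (assoc_mx p) Mplus ->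
  0 <= lam < 1 ->
  (forall i j, lam <= assoc_mx p i j * norm1 x ^+ 2 / (x i * x j)) ->
  (exists y : 'cV[R]_d, assoc_mx p *m y = uvec x) ->
  lam <= (((uvec x)^T *m Mplus *m uvec x) 0 0)^-1 ->
  (forall i, norm1 x ^+ 2 * (\sum_(j < d | j != i) assoc_mx p i j - assoc_mx p i i)
             <= lam * x i * (norm1 x - 2 * x i)) ->
  separable (DS_state p) /\ completely_positive (assoc_mx p).
Proof.
move=> _ wp _ x_gt0 _ /andP[lam_ge0 _] lower _ _ dom.
have [_ [psym _]] := wp.
have cpM := cp_of_uvec_bounds (assoc_mxC psym) x_gt0 lam_ge0 lower dom.
by split; first exact: separable_DS_of_cp.
Qed.
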